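(* Let $\mathcal D$ be partitioned into rectangles $K_{ij}$, let $V_h^k$ be the space of piecewise polynomials of degree at most $k$ on this mesh, $\mathbf V_h^k$ the $M$-vectors with entries in $V_h^k$, and let $\mathbf A(\mathbf x)=(a_{kj})$ be a symmetric positive definite $M\times M$ matrix function, smooth on each cell, with $\bar{\mathbf A}$ the matrix of gradients $(\nabla a_{kl})$. Let $\Delta t>0$ be a uniform time step and consider the fully discrete LDG–leapfrog scheme: find $\widehat{\mathbf v}_h^{n+1}\in\mathbf V_h^k$ and $\widehat{\mathbf S}_h^n\in(\mathbf V_h^k)^2$ such that for every cell $K$ with outward normal $\boldsymbol\nu$, $$\int_K\frac{\widehat{\mathbf v}_h^{n+1}-2\widehat{\mathbf v}_h^n+\widehat{\mathbf v}_h^{n-1}}{(\Delta t)^2}\cdot\mathbf p_h\,d\mathbf x+\int_K\mathbf A\widehat{\mathbf S}_h^n\cdot\nabla\mathbf p_h\,d\mathbf x-\big(\mathbf A^-(\widehat{\mathbf S}_h^n)^-\boldsymbol\nu,\mathbf p_h\big)_{\partial K}=0\quad\forall\mathbf p_h\in\mathbf V_h^k,$$ $$\int_K\widehat{\mathbf S}_h^n\cdot\mathbf w_h\,d\mathbf x+\int_K\mathbf A\widehat{\mathbf v}_h^n\cdot\operatorname{div}\mathbf w_h\,d\mathbf x+\int_K\bar{\mathbf A}\widehat{\mathbf v}_h^n\cdot\mathbf w_h\,d\mathbf x-\big(\mathbf A(\widehat{\mathbf v}_h^n)^+,\mathbf w_h\boldsymbol\nu\big)_{\partial K}=0\quad\forall\mathbf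 w_h\in(\mathbf V_h^k)^2,$$ with alternating traces ($-$: left/lower, $+$: right/upper) and homogeneous Dirichlet boundary conditions on $\partial\mathcal D$. Then the fully discrete energy $$E_h^{n+1}=\Big\|\frac{\widehat{\mathbf v}_h^{n+1}-\widehat{\mathbf v}_h^n}{\Delta t}\Big\|^2+\Big\|\frac{\widehat{\mathbf S}_h^{n+1}+\widehat{\mathbf S}_h^n}{2}\Big\|^2-\frac{(\Delta t)^2}{4}\Big\|\frac{\widehat{\mathbf S}_h^{n+1}-\widehat{\mathbf S}_h^n}{\Delta t}\Big\|^2$$ (with $\|\cdot\|$ the $L^2(\mathcal D)$ norm) is conserved by the scheme for all $n$, i.e. $E_h^{n+1}=E_h^n$.
   Context: The scheme discretizes the stochastic Galerkin system $\partial_t^2\widehat{\mathbf v}=\operatorname{div}(\mathbf A\widehat{\mathbf S})$, $\widehat{\mathbf S}=\mathbf A\nabla\widehat{\mathbf v}$ with $\widehat{\mathbf v}=0$ on $\partial\mathcal D$, where $a_{kj}(\mathbf x)=\int a(\mathbf x,\mathbf y)\Phi_k\Phi_j\rho\,d\mathbf y$. In the boundary term of the second equation $\mathbf A$ is evaluated from inside the cell; $\mathbf A^-$ has entries $a_{kj}^-$. ''$\cdot$'' denotes the Euclidean/Frobenius inner product, and divergence/gradient act row-wise. $\widehat{\mathbf v}_h^n,\widehat{\mathbf S}_h^n$ are the approximations at $t_n=n\Delta t$. *)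

From Stdlib Require Import Reals Arith List.
From Coquelicot Require Import Coquelicot.
Import ListNotations.
Open Scope R_scope.

Fixpoint sumR (n : nat) (f : nat -> R) : R :=
  match n with O => 0 | S n' => sumR n' f + f n' end.

Definition fun2 := R -> R -> R.
(* a broken (piecewise) function: cell (i,j) |-> its polynomial/smooth piece *)
Definition dgfun := nat -> nat -> fun2.

Definition dxp (f : fun2) : fun2 := fun x y => Derive (fun t => f t y) x.
Definition dyp (f : fun2) : fun2 := fun x y => Derive (fun t => f x t) y.
Definition pd (d : nat) (f : fun2) : fun2 :=
  match d with O => dxp f | _ => dyp f end.

Fixpoint dpart (s : list bool) (f : fun2) : fun2 :=
  match s with
  | nil => f
  | b :: s' => if b then dxp (dpart s' f) else dyp (dpart s' f)
  end.

Definition smooth2 (f : fun2) : Prop :=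
  forall (s : list bool) (x y : R),
    ex_derive (fun t => dpart s f t y) x /\
    ex_derive (fun t => dpart s f x t) y /\
    continuous (fun p : R * R => dpart s f (fst p) (snd p)) (x, y).

Definition poly2 (k : nat) (f : fun2) : Prop :=
  exists c : nat -> nat -> R, forall x y,
    f x y = sumR (S k) (fun a => sumR (S k - a) (fun b => c a b * x ^ a * y ^ b)).

Definition in_cell (xg yg : nat -> R) (i j : nat) (x y : R) : Prop :=
  xg i <= x <= xg (S i) /\ yg j <= y <= yg (S j).

Definition cell_int (xg yg : nat -> R) (i j : nat) (g : fun2) : R :=
  RInt (fun x => RInt (fun y => g x y) (yg j) (yg (S j))) (xg i) (xg (S i)).

Definition in_Vh (Nx Ny k : nat) (u : dgfun) : Prop :=
  forall i j, (i < Nx)%nat -> (j < Ny)%nat -> poly2 k (u i j).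
Definition in_VhM (Nx Ny M k : nat) (u : nat -> dgfun) : Prop :=
  forall m, (m < M)%nat -> in_Vh Nx Ny k (u m).
Definition in_VhM2 (Nx Ny M k : nat) (w : nat -> nat -> dgfun) : Prop :=
  forall m d, (m < M)%nat -> (d < 2)%nat -> in_Vh Nx Ny k (w m d).

(* Coefficient matrix, given cellwise: A i j k l x y = a_kl(x,y) on K_ij
   (smooth on each cell, possibly discontinuous across cells). *)
Definition coefmat := nat -> nat -> nat -> nat -> fun2.

Definition spd_on_cell (xg yg : nat -> R) (M : nat) (A : coefmat) (i j : nat) : Prop :=
  forall x y, in_cell xg yg i j x y ->
    (forall k l, (k < M)%nat -> (l < M)%nat -> A i j k l x y = A i j l k x y) /\
    (forall xi : nat -> R, (exists m, (m < M)%nat /\ xi m <> 0) ->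
       0 < sumR M (fun k => sumR M (fun l => xi k * A i j k l x y * xi l))).

(* S-hat = S^- (left/lower cell), with A^- from that same cell; on the
   boundary of D (no left/lower neighbour) the interior trace is used
   (Nat.pred 0 = 0).
   v-hat = v^+ (right/upper cell); on the boundary of D, v-hat = 0
   (homogeneous Dirichlet). *)
Definition vhat_right (Nx : nat) (u : dgfun) (i j : nat) : fun2 :=
  fun x y => if Nat.eqb (S i) Nx then 0 else u (S i) j x y.
Definition vhat_left (u : dgfun) (i j : nat) : fun2 :=
  fun x y => if Nat.eqb i 0 then 0 else u i j x y.
Definition vhat_top (Ny : nat) (u : dgfun) (i j : nat) : fun2 :=
  fun x y => if Nat.eqb (S j) Ny then 0 else u i (S j) x y.
Definition vhat_bottom (u : dgfun) (i j : nat) : fun2 :=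
  fun x y => if Nat.eqb j 0 then 0 else u i j x y.

(* Left-hand side of the first equation on cell K_ij, tested with p.
   vm, vc, vp = v^{n-1}, v^n, v^{n+1};  Sc = S^n  (Sc l d = component (l,d)). *)
Definition ldg_eq1 (xg yg : nat -> R) (M : nat) (A : coefmat) (dt : R)
  (vm vc vp : nat -> dgfun) (Sc : nat -> nat -> dgfun) (p : nat -> dgfun)
  (i j : nat) : R :=
  let xl := xg i in let xr := xg (S i) in
  let yb := yg j in let yt := yg (S j) in
  let il := Nat.pred i in let jb := Nat.pred j in
  cell_int xg yg i j (fun x y => sumR M (fun k =>
      (vp k i j x y - 2 * vc k i j x y + vm k i j x y) / dt ^ 2 * p k i j x y))
  + cell_int xg yg i j (fun x y => sumR M (fun k => sumR 2 (fun d => sumR M (fun l =>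
      A i j k l x y * Sc l d i j x y * pd d (p k i j) x y))))
  - ( RInt (fun y => sumR M (fun k =>
          sumR M (fun l => A i j k l xr y * Sc l 0%nat i j xr y) * p k i j xr y)) yb yt
    - RInt (fun y => sumR M (fun k =>
          sumR M (fun l => A il j k l xl y * Sc l 0%nat il j xl y) * p k i j xl y)) yb yt
    + RInt (fun x => sumR M (fun k =>
          sumR M (fun l => A i j k l x yt * Sc l 1%nat i j x yt) * p k i j x yt)) xl xr
    - RInt (fun x => sumR M (fun k =>
          sumR M (fun l => A i jb k l x yb * Sc l 1%nat i jb x yb) * p k i j x yb)) xl xr ).

(* Left-hand side of the second equation on cell K_ij, tested with w.
   vc = v^n, Sc = S^n. Abar v . w = sum_k sum_d sum_l (d_d a_kl) v_l w_kd. *)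
Definition ldg_eq2 (Nx Ny : nat) (xg yg : nat -> R) (M : nat) (A : coefmat)
  (vc : nat -> dgfun) (Sc : nat -> nat -> dgfun) (w : nat -> nat -> dgfun)
  (i j : nat) : R :=
  let xl := xg i in let xr := xg (S i) in
  let yb := yg j in let yt := yg (S j) in
  cell_int xg yg i j (fun x y => sumR M (fun k => sumR 2 (fun d =>
      Sc k d i j x y * w k d i j x y)))
  + cell_int xg yg i j (fun x y => sumR M (fun k =>
      sumR M (fun l => A i j k l x y * vc l i j x y) *
      sumR 2 (fun d => pd d (w k d i j) x y)))
  + cell_int xg yg i j (fun x y => sumR M (fun k => sumR 2 (fun d => sumR M (fun l =>
      pd d (A i j k l) x y * vc l i j x y * w k d i j x y))))
  - ( RInt (fun y => sumR M (fun k =>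
          sumR M (fun l => A i j k l xr y * vhat_right Nx (vc l) i j xr y)
          * w k 0%nat i j xr y)) yb yt
    - RInt (fun y => sumR M (fun k =>
          sumR M (fun l => A i j k l xl y * vhat_left (vc l) i j xl y)
          * w k 0%nat i j xl y)) yb yt
    + RInt (fun x => sumR M (fun k =>
          sumR M (fun l => A i j k l x yt * vhat_top Ny (vc l) i j x yt)
          * w k 1%nat i j x yt)) xl xr
    - RInt (fun x => sumR M (fun k =>
          sumR M (fun l => A i j k l x yb * vhat_bottom (vc l) i j x yb)
          * w k 1%nat i j x yb)) xl xr ).

Definition l2sq (Nx Ny : nat) (xg yg : nat -> R) (M : nat) (u : nat -> dgfun) : R :=
  sumR Nx (fun i => sumR Ny (fun j =>
    cell_int xg yg i j (fun x y => sumR M (fun k => (u k i j x y) ^ 2)))).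
Definition l2sq2 (Nx Ny : nat) (xg yg : nat -> R) (M : nat) (u : nat -> nat -> dgfun) : R :=
  sumR Nx (fun i => sumR Ny (fun j =>
    cell_int xg yg i j (fun x y => sumR M (fun k => sumR 2 (fun d => (u k d i j x y) ^ 2))))).

Definition energy (Nx Ny : nat) (xg yg : nat -> R) (M : nat) (dt : R)
  (v : nat -> nat -> dgfun) (Sh : nat -> nat -> nat -> dgfun) (m : nat) : R :=
  l2sq Nx Ny xg yg M (fun k i j x y => (v m k i j x y - v (m - 1)%nat k i j x y) / dt)
  + l2sq2 Nx Ny xg yg M (fun k d i j x y => (Sh m k d i j x y + Sh (m - 1)%nat k d i j x y) / 2)
  - dt ^ 2 / 4 *
    l2sq2 Nx Ny xg yg M (fun k d i j x y => (Sh m k d i j x y - Sh (m - 1)%nat k d i j x y) / dt).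

From Stdlib Require Import Reals Arith Lra Lia.
From Coquelicot Require Import Coquelicot.
Open Scope R_scope.

(* Test the first equation with v^{n+1} - v^{n-1}, test the second one at levels n+1 and
   n-1 with S^n, and add.  On each cell, integration by parts turns the volume terms into
   boundary integrals of A (v^{n+1} - v^{n-1}) . S^n; by the symmetry of A and the
   alternating choice of traces these cancel the numerical fluxes up to one quantity per
   interior edge, which enters the two adjacent cells with opposite signs, while the
   Dirichlet condition removes the edges on the boundary of D.  What is left on each cell
   is the increment of |(v^{m} - v^{m-1})/dt|^2 + S^{m} . S^{m-1} from m = n to m = n+1,
   and this cell quantity sums to E_h^m because (a + b)^2/4 - (a - b)^2/4 = a b. *)

(** * Finite sums *)

Lemma sumR_ext n f g : (forall m, (m < n)%nat -> f m = g m) -> sumR n f = sumR n g.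
Proof. induction n as [|n IH]; simpl; intros H; auto. rewrite IH, H; auto. Qed.

Lemma sumR_plus n f g : sumR n (fun m => f m + g m) = sumR n f + sumR n g.
Proof. induction n as [|n IH]; simpl; [lra|]. rewrite IH; lra. Qed.

Lemma sumR_minus n f g : sumR n (fun m => f m - g m) = sumR n f - sumR n g.
Proof. induction n as [|n IH]; simpl; [lra|]. rewrite IH; lra. Qed.

Lemma sumR_scal_l n c f : sumR n (fun m => c * f m) = c * sumR n f.
Proof. induction n as [|n IH]; simpl; [lra|]. rewrite IH; lra. Qed.

Lemma sumR_scal_r n c f : sumR n (fun m => f m * c) = sumR n f * c.
Proof. induction n as [|n IH]; simpl; [lra|]. rewrite IH; lra. Qed.

Lemma sumR_zero n : sumR n (fun _ => 0) = 0.
Proof. induction n as [|n IH]; simpl; [lra|]. rewrite IH; lra. Qed.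

Lemma sumR_comm n p (f : nat -> nat -> R) :
  sumR n (fun a => sumR p (fun b => f a b)) = sumR p (fun b => sumR n (fun a => f a b)).
Proof.
  induction n as [|n IH]; simpl; [now rewrite sumR_zero|].
  now rewrite IH, <- sumR_plus.
Qed.

Lemma sumR_shift n f : sumR (S n) f = f 0%nat + sumR n (fun m => f (S m)).
Proof. induction n as [|n IH]; simpl in *; [lra|]. rewrite IH; lra. Qed.

Lemma sumR_telescope N (g : nat -> R) :
  sumR N (fun i => (if Nat.eqb i 0 then 0 else g (Nat.pred i))
                   - (if Nat.eqb (S i) N then 0 else g i)) = 0.
Proof.
  rewrite sumR_minus. destruct N as [|N]; [simpl; lra|].
  rewrite sumR_shift. cbn [sumR Nat.eqb Nat.pred]. rewrite Nat.eqb_refl.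
  rewrite (sumR_ext N (fun m => if Nat.eqb m N then 0 else g m) (fun m => g m)); [lra|].
  intros m Hm. destruct (Nat.eqb_spec m N); [lia|reflexivity].
Qed.

Definition mesh_sum (Nx Ny : nat) (g : nat -> nat -> R) : R :=
  sumR Nx (fun i => sumR Ny (fun j => g i j)).

Lemma mesh_sum_ext Nx Ny f g :
  (forall i j, (i < Nx)%nat -> (j < Ny)%nat -> f i j = g i j) ->
  mesh_sum Nx Ny f = mesh_sum Nx Ny g.
Proof.
  intros H. apply sumR_ext; intros i Hi. apply sumR_ext; intros j Hj. auto.
Qed.

Lemma mesh_sum_minus Nx Ny f g :
  mesh_sum Nx Ny (fun i j => f i j - g i j) = mesh_sum Nx Ny f - mesh_sum Nx Ny g.
Proof.
  unfold mesh_sum. rewrite <- sumR_minus. apply sumR_ext; intros. apply sumR_minus.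
Qed.

Lemma mesh_sum_telescope_x Nx Ny (g : nat -> nat -> R) :
  mesh_sum Nx Ny (fun i j => (if Nat.eqb i 0 then 0 else g (Nat.pred i) j)
                             - (if Nat.eqb (S i) Nx then 0 else g i j)) = 0.
Proof.
  unfold mesh_sum. rewrite sumR_comm, <- (sumR_zero Ny) at 1.
  apply sumR_ext; intros j _. apply (sumR_telescope Nx (fun i => g i j)).
Qed.

Lemma mesh_sum_telescope_y Nx Ny (g : nat -> nat -> R) :
  mesh_sum Nx Ny (fun i j => (if Nat.eqb j 0 then 0 else g i (Nat.pred j))
                             - (if Nat.eqb (S j) Ny then 0 else g i j)) = 0.
Proof.
  unfold mesh_sum. rewrite <- (sumR_zero Nx) at 1.
  apply sumR_ext; intros i _. apply (sumR_telescope Ny (g i)).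
Qed.

Definition bform (M : nat) (a : nat -> nat -> R) (u s : nat -> R) : R :=
  sumR M (fun k => sumR M (fun l => a k l * u l) * s k).

Lemma bform_sym M a u s :
  (forall k l, (k < M)%nat -> (l < M)%nat -> a k l = a l k) ->
  bform M a u s = bform M a s u.
Proof.
  intros Hsym. unfold bform.
  rewrite (sumR_ext M _ (fun k => sumR M (fun l => a k l * u l * s k)))
    by (intros; now rewrite <- sumR_scal_r).
  rewrite sumR_comm. apply sumR_ext; intros l Hl.
  rewrite <- sumR_scal_r. apply sumR_ext; intros k Hk.
  rewrite Hsym; auto; ring.
Qed.

Lemma bform_minus_l M a u w s :
  bform M a (fun l => u l - w l) s = bform M a u s - bform M a w s.
Proof.
  unfold bform. rewrite <- sumR_minus. apply sumR_ext; intros k _.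
  rewrite <- Rmult_minus_distr_r, <- sumR_minus. f_equal.
  apply sumR_ext; intros; ring.
Qed.

Lemma bform_zero_l M a s : bform M a (fun _ => 0) s = 0.
Proof.
  unfold bform. rewrite (sumR_ext M _ (fun _ => 0)); [apply sumR_zero|].
  intros k _. rewrite (sumR_ext M _ (fun _ => 0)) by (intros; ring).
  rewrite sumR_zero; ring.
Qed.

(** * Continuous and C^1 functions of two variables *)

Definition continuous2 (f : fun2) : Prop := forall x y, continuity_2d_pt f x y.

Lemma continuous2_x f x y : continuous2 f -> continuous (fun t => f t y) x.
Proof.
  intros H. apply (continuous_comp_2 (fun t => t) (fun _ => y) f).
  - apply continuous_id.
  - apply continuous_const.
  - apply continuity_2d_pt_filterlim, H.
Qed.

Lemma continuous2_y f x y : continuous2 f -> continuous (fun t => f x t) y.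
Proof.
  intros H. apply (continuous_comp_2 (fun _ => x) (fun t => t) f).
  - apply continuous_const.
  - apply continuous_id.
  - apply continuity_2d_pt_filterlim, H.
Qed.

Lemma continuous2_ext f g : (forall x y, f x y = g x y) -> continuous2 f -> continuous2 g.
Proof. intros E H x y. eapply continuity_2d_pt_ext; eauto. Qed.

Lemma continuous2_const c : continuous2 (fun _ _ => c).
Proof. intros x y. apply continuity_2d_pt_const. Qed.

Lemma continuous2_plus f g :
  continuous2 f -> continuous2 g -> continuous2 (fun x y => f x y + g x y).
Proof. intros ? ? x y. apply continuity_2d_pt_plus; auto. Qed.

Lemma continuous2_minus f g :
  continuous2 f -> continuous2 g -> continuous2 (fun x y => f x y - g x y).
Proof. intros ? ? x y. apply continuity_2d_pt_minus; auto. Qed.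

Lemma continuous2_mult f g :
  continuous2 f -> continuous2 g -> continuous2 (fun x y => f x y * g x y).
Proof. intros ? ? x y. apply continuity_2d_pt_mult; auto. Qed.

Lemma continuous2_div_r f c : continuous2 f -> continuous2 (fun x y => f x y / c).
Proof. intros H. apply (continuous2_mult f (fun _ _ => / c)); auto using continuous2_const. Qed.

Lemma continuous2_pow f n : continuous2 f -> continuous2 (fun x y => f x y ^ n).
Proof.
  intros H. induction n as [|n IH]; simpl; [apply continuous2_const|].
  now apply (continuous2_mult f (fun x y => f x y ^ n)).
Qed.

Lemma continuous2_sumR n (f : nat -> fun2) :
  (forall m, (m < n)%nat -> continuous2 (f m)) ->
  continuous2 (fun x y => sumR n (fun m => f m x y)).
Proof.
  induction n as [|n IH]; simpl; intros H; [apply continuous2_const|].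
  apply continuous2_plus; auto.
Qed.

Lemma continuous_sumR n (f : nat -> R -> R) t :
  (forall m, (m < n)%nat -> continuous (f m) t) ->
  continuous (fun x => sumR n (fun m => f m x)) t.
Proof.
  induction n as [|n IH]; simpl; intros H; [apply continuous_const|].
  apply (continuous_plus (fun x => sumR n (fun m => f m x)) (f n)); auto.
Qed.

Lemma continuous2_ex_RInt_y f x c d : continuous2 f -> ex_RInt (fun y => f x y) c d.
Proof.
  intros H. apply (@ex_RInt_continuous R_CompleteNormedModule).
  intros; now apply continuous2_y.
Qed.

Lemma continuous2_ex_RInt_x f y a b : continuous2 f -> ex_RInt (fun x => f x y) a b.
Proof.
  intros H. apply (@ex_RInt_continuous R_CompleteNormedModule).
  intros; now apply continuous2_x.
Qed.

Lemma continuous_RInt_param_le f c d x0 : continuous2 f -> c <= d ->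
  continuous (fun x => RInt (fun y => f x y) c d) x0.
Proof.
  intros H Hcd. apply filterlim_locally. intros eps.
  (* uniform continuity on [x0-1, x0+1] x [c, d] with modulus eps / (d - c + 1) *)
  assert (Heps : 0 < eps / (d - c + 1)) by (apply Rdiv_lt_0_compat; [apply cond_pos|lra]).
  destruct (uniform_continuity_2d f (x0 - 1) (x0 + 1) c d) with (eps := mkposreal _ Heps)
    as [delta Hdelta]; [intros; apply H|].
  assert (Hpos : 0 < Rmin delta 1) by (apply Rmin_pos; [apply cond_pos|lra]).
  exists (mkposreal _ Hpos). intros x Hx.
  change (Rabs (x - x0) < Rmin delta 1) in Hx.
  change (Rabs (RInt (fun y => f x y) c d - RInt (fun y => f x0 y) c d) < eps).
  assert (Hxd : Rabs (x - x0) < delta) by (eapply Rlt_le_trans; [apply Hx|apply Rmin_l]).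
  assert (Hx1 : Rabs (x - x0) < 1) by (eapply Rlt_le_trans; [apply Hx|apply Rmin_r]).
  apply Rabs_def2 in Hx1.
  rewrite <- (RInt_minus (fun y => f x y) (fun y => f x0 y)) by now apply continuous2_ex_RInt_y.
  eapply Rle_lt_trans.
  - apply abs_RInt_le_const with (M := eps / (d - c + 1)); auto.
    + apply ex_RInt_minus; now apply continuous2_ex_RInt_y.
    + intros t Ht. left. apply (Hdelta x0 t x t); try lra.
      rewrite Rminus_eq_0, Rabs_R0. apply cond_pos.
  - assert (0 < eps) by apply cond_pos.
    apply Rlt_le_trans with ((d - c + 1) * (eps / (d - c + 1))).
    + apply Rmult_lt_compat_r; lra.
    + right; field; lra.
Qed.

Lemma continuous_RInt_param f c d x0 : continuous2 f ->
  continuous (fun x => RInt (fun y => f x y) c d) x0.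
Proof.
  intros H. destruct (Rle_dec c d) as [Hcd|Hcd]; [now apply continuous_RInt_param_le|].
  apply continuous_ext with (fun x => opp (RInt (fun y => f x y) d c)).
  { intros x. rewrite opp_RInt_swap; auto. now apply continuous2_ex_RInt_y. }
  apply (continuous_opp (fun x => RInt (fun y => f x y) d c)).
  apply continuous_RInt_param_le; auto; lra.
Qed.

Lemma ex_RInt_RInt f a b c d : continuous2 f ->
  ex_RInt (fun x => RInt (fun y => f x y) c d) a b.
Proof.
  intros H. apply (@ex_RInt_continuous R_CompleteNormedModule).
  intros; now apply continuous_RInt_param.
Qed.

Record C1 (f : fun2) : Prop := {
  C1_cont : continuous2 f;
  C1_cont_dxp : continuous2 (dxp f);
  C1_cont_dyp : continuous2 (dyp f);
  C1_ex_dxp : forall x y, ex_derive (fun t => f t y) x;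
  C1_ex_dyp : forall x y, ex_derive (fun t => f x t) y }.

Lemma dxp_ext f g x y : (forall x y, f x y = g x y) -> dxp f x y = dxp g x y.
Proof. intros E. apply Derive_ext; auto. Qed.

Lemma dyp_ext f g x y : (forall x y, f x y = g x y) -> dyp f x y = dyp g x y.
Proof. intros E. apply Derive_ext; auto. Qed.

Lemma C1_ext f g : (forall x y, f x y = g x y) -> C1 f -> C1 g.
Proof.
  intros E [H1 H2 H3 H4 H5]. split.
  - eapply continuous2_ext; eauto.
  - eapply continuous2_ext; [|apply H2]. intros; now apply dxp_ext.
  - eapply continuous2_ext; [|apply H3]. intros; now apply dyp_ext.
  - intros x y. eapply ex_derive_ext; [|apply H4]; simpl; auto.
  - intros x y. eapply ex_derive_ext; [|apply H5]; simpl; auto.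
Qed.

Lemma dxp_plus f g x y : C1 f -> C1 g ->
  dxp (fun x y => f x y + g x y) x y = dxp f x y + dxp g x y.
Proof. intros Hf Hg. apply (Derive_plus (fun t => f t y) (fun t => g t y)); apply C1_ex_dxp; auto. Qed.

Lemma dyp_plus f g x y : C1 f -> C1 g ->
  dyp (fun x y => f x y + g x y) x y = dyp f x y + dyp g x y.
Proof. intros Hf Hg. apply (Derive_plus (fun t => f x t) (fun t => g x t)); apply C1_ex_dyp; auto. Qed.

Lemma dxp_mult f g x y : C1 f -> C1 g ->
  dxp (fun x y => f x y * g x y) x y = dxp f x y * g x y + f x y * dxp g x y.
Proof. intros Hf Hg. apply (Derive_mult (fun t => f t y) (fun t => g t y)); apply C1_ex_dxp; auto. Qed.

Lemma dyp_mult f g x y : C1 f -> C1 g ->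
  dyp (fun x y => f x y * g x y) x y = dyp f x y * g x y + f x y * dyp g x y.
Proof. intros Hf Hg. apply (Derive_mult (fun t => f x t) (fun t => g x t)); apply C1_ex_dyp; auto. Qed.

Lemma C1_const c : C1 (fun _ _ => c).
Proof.
  split; try apply continuous2_const; intros; try apply ex_derive_const.
  - apply continuous2_ext with (fun _ _ => 0); [|apply continuous2_const].
    intros; unfold dxp; now rewrite Derive_const.
  - apply continuous2_ext with (fun _ _ => 0); [|apply continuous2_const].
    intros; unfold dyp; now rewrite Derive_const.
Qed.

Lemma C1_plus f g : C1 f -> C1 g -> C1 (fun x y => f x y + g x y).
Proof.
  intros Hf Hg. split.
  - apply continuous2_plus; now apply C1_cont.
  - apply continuous2_ext with (fun x y => dxp f x y + dxp g x y).
    { intros; symmetry; now apply dxp_plus. }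
    apply continuous2_plus; now apply C1_cont_dxp.
  - apply continuous2_ext with (fun x y => dyp f x y + dyp g x y).
    { intros; symmetry; now apply dyp_plus. }
    apply continuous2_plus; now apply C1_cont_dyp.
  - intros x y. apply (ex_derive_plus (fun t => f t y) (fun t => g t y)); now apply C1_ex_dxp.
  - intros x y. apply (ex_derive_plus (fun t => f x t) (fun t => g x t)); now apply C1_ex_dyp.
Qed.

Lemma C1_mult f g : C1 f -> C1 g -> C1 (fun x y => f x y * g x y).
Proof.
  intros Hf Hg.
  assert (Cf := C1_cont f Hf). assert (Cg := C1_cont g Hg). split.
  - now apply continuous2_mult.
  - apply continuous2_ext with (fun x y => dxp f x y * g x y + f x y * dxp g x y).
    { intros; symmetry; now apply dxp_mult. }
    apply continuous2_plus; apply continuous2_mult; auto; now apply C1_cont_dxp.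
  - apply continuous2_ext with (fun x y => dyp f x y * g x y + f x y * dyp g x y).
    { intros; symmetry; now apply dyp_mult. }
    apply continuous2_plus; apply continuous2_mult; auto; now apply C1_cont_dyp.
  - intros x y. apply (ex_derive_mult (fun t => f t y) (fun t => g t y)); now apply C1_ex_dxp.
  - intros x y. apply (ex_derive_mult (fun t => f x t) (fun t => g x t)); now apply C1_ex_dyp.
Qed.

Lemma C1_minus f g : C1 f -> C1 g -> C1 (fun x y => f x y - g x y).
Proof.
  intros Hf Hg. apply C1_ext with (fun x y => f x y + (-1) * g x y); [intros; ring|].
  apply C1_plus, C1_mult; auto using C1_const.
Qed.

Lemma C1_sumR n (f : nat -> fun2) :
  (forall m, (m < n)%nat -> C1 (f m)) -> C1 (fun x y => sumR n (fun m => f m x y)).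
Proof.
  induction n as [|n IH]; simpl; intros H; [apply C1_const|].
  apply C1_plus; auto.
Qed.

Lemma C1_pow_x a : C1 (fun x _ => x ^ a).
Proof.
  induction a as [|a IH]; simpl; [apply C1_const|]. apply (C1_mult (fun x _ => x)); auto.
  split; intros; auto using continuous2_const, ex_derive_id, ex_derive_const.
  - intros x y; apply continuity_2d_pt_id1.
  - apply continuous2_ext with (fun _ _ => 1); [|apply continuous2_const].
    intros; unfold dxp; now rewrite Derive_id.
  - apply continuous2_ext with (fun _ _ => 0); [|apply continuous2_const].
    intros; unfold dyp; now rewrite Derive_const.
Qed.

Lemma C1_pow_y a : C1 (fun _ y => y ^ a).
Proof.
  induction a as [|a IH]; simpl; [apply C1_const|]. apply (C1_mult (fun _ y => y)); auto.
  split; intros; auto using continuous2_const, ex_derive_id, ex_derive_const.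
  - intros x y; apply continuity_2d_pt_id2.
  - apply continuous2_ext with (fun _ _ => 0); [|apply continuous2_const].
    intros; unfold dxp; now rewrite Derive_const.
  - apply continuous2_ext with (fun _ _ => 1); [|apply continuous2_const].
    intros; unfold dyp; now rewrite Derive_id.
Qed.

Lemma poly2_C1 k f : poly2 k f -> C1 f.
Proof.
  intros [c Hc]. apply C1_ext with (fun x y => sumR (S k) (fun a => sumR (S k - a)
    (fun b => c a b * x ^ a * y ^ b))); [intros; now rewrite Hc|].
  apply C1_sumR; intros a _. apply C1_sumR; intros b _.
  apply C1_mult; [apply C1_mult|]; auto using C1_const, C1_pow_x, C1_pow_y.
Qed.

Lemma poly2_minus k f g : poly2 k f -> poly2 k g -> poly2 k (fun x y => f x y - g x y).
Proof.
  intros [c Hc] [d Hd]. exists (fun a b => c a b - d a b). intros x y.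
  rewrite Hc, Hd, <- sumR_minus. apply sumR_ext; intros a _.
  rewrite <- sumR_minus. apply sumR_ext; intros b _. ring.
Qed.

Lemma smooth2_C1 f : smooth2 f -> C1 f.
Proof.
  intros H.
  assert (C : forall s, continuous2 (dpart s f)).
  { intros s x y. apply continuity_2d_pt_filterlim, (H s x y). }
  split; [apply (C nil)|apply (C (cons true nil))|apply (C (cons false nil))| |];
    intros x y; apply (H nil x y).
Qed.

Lemma continuous2_pd d f : C1 f -> continuous2 (pd d f).
Proof. intros H. destruct d; simpl; [apply C1_cont_dxp|apply C1_cont_dyp]; auto. Qed.

Lemma RInt_RInt_dyp F a b c d : C1 F ->
  RInt (fun x => RInt (fun y => dyp F x y) c d) a b
  = RInt (fun x => F x d) a b - RInt (fun x => F x c) a b.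
Proof.
  intros HF. rewrite (RInt_ext _ (fun x => F x d - F x c)).
  - apply (RInt_minus (fun x => F x d) (fun x => F x c));
      apply continuous2_ex_RInt_x, C1_cont, HF.
  - intros x _. apply (RInt_Derive (fun t => F x t)).
    + intros; apply C1_ex_dyp, HF.
    + intros; apply (continuous2_y (dyp F)), C1_cont_dyp, HF.
Qed.

Lemma RInt_RInt_dxp F a b c d : C1 F ->
  RInt (fun x => RInt (fun y => dxp F x y) c d) a b
  = RInt (fun y => F b y) c d - RInt (fun y => F a y) c d.
Proof.
  intros HF. set (G := fun x => RInt (fun y => F x y) c d).
  assert (DG : forall x, is_derive G x (RInt (fun y => dxp F x y) c d)).
  { intros x. apply (is_derive_RInt_param F c d x).
    - apply filter_forall. intros; apply C1_ex_dxp, HF.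
    - intros t _. apply C1_cont_dxp, HF.
    - apply filter_forall. intros; apply continuous2_ex_RInt_y, C1_cont, HF. }
  rewrite (RInt_ext _ (Derive G)) by (intros; symmetry; now apply is_derive_unique).
  rewrite RInt_Derive; [reflexivity| |].
  - intros; eexists; apply DG.
  - intros. apply continuous_ext with (fun x => RInt (fun y => dxp F x y) c d).
    { intros; symmetry; now apply is_derive_unique. }
    apply continuous_RInt_param, C1_cont_dxp, HF.
Qed.

Lemma pd_plus d f g x y : C1 f -> C1 g ->
  pd d (fun x y => f x y + g x y) x y = pd d f x y + pd d g x y.
Proof. destruct d; [apply dxp_plus|apply dyp_plus]. Qed.

Lemma pd_mult d f g x y : C1 f -> C1 g ->
  pd d (fun x y => f x y * g x y) x y = pd d f x y * g x y + f x y * pd d g x y.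
Proof. destruct d; [apply dxp_mult|apply dyp_mult]. Qed.

Lemma pd_sumR d n (f : nat -> fun2) x y : (forall m, (m < n)%nat -> C1 (f m)) ->
  pd d (fun x y => sumR n (fun m => f m x y)) x y = sumR n (fun m => pd d (f m) x y).
Proof.
  induction n as [|n IH]; intros H.
  - destruct d; cbn [pd sumR]; [unfold dxp|unfold dyp]; apply Derive_const.
  - cbn [sumR]. rewrite (pd_plus d (fun x y => sumR n (fun m => f m x y)) (f n)).
    + rewrite IH; auto.
    + apply C1_sumR; auto.
    + auto.
Qed.

Definition bform_fun (M : nat) (a : nat -> nat -> fun2) (u s : nat -> fun2) : fun2 :=
  fun x y => bform M (fun k l => a k l x y) (fun l => u l x y) (fun k => s k x y).

Section BformFun.
Variables (M : nat) (a : nat -> nat -> fun2) (u s : nat -> fun2).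
Hypothesis Ha : forall k l, (k < M)%nat -> (l < M)%nat -> C1 (a k l).
Hypothesis Hu : forall l, (l < M)%nat -> C1 (u l).
Hypothesis Hs : forall k, (k < M)%nat -> C1 (s k).

Let C1_row k : (k < M)%nat -> C1 (fun x y => sumR M (fun l => a k l x y * u l x y)).
Proof. intros Hk. apply C1_sumR; intros l Hl. apply C1_mult; auto. Qed.

Lemma C1_bform_fun : C1 (bform_fun M a u s).
Proof. apply C1_sumR; intros k Hk. apply C1_mult; auto. Qed.

Lemma pd_bform_fun d x y :
  pd d (bform_fun M a u s) x y =
  sumR M (fun k =>
    sumR M (fun l => pd d (a k l) x y * u l x y + a k l x y * pd d (u l) x y) * s k x y
    + sumR M (fun l => a k l x y * u l x y) * pd d (s k) x y).
Proof.
  unfold bform_fun, bform.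
  rewrite (pd_sumR d M (fun k x y => sumR M (fun l => a k l x y * u l x y) * s k x y))
    by (intros k Hk; apply C1_mult; auto).
  apply sumR_ext; intros k Hk.
  rewrite (pd_mult d (fun x y => sumR M (fun l => a k l x y * u l x y)) (s k))
    by auto.
  rewrite (pd_sumR d M (fun l x y => a k l x y * u l x y)) by (intros; apply C1_mult; auto).
  f_equal. f_equal. apply sumR_ext; intros l Hl. apply pd_mult; auto.
Qed.

End BformFun.

(** * Integrals over edges and cells *)

Lemma RInt_ext_le (f g : R -> R) a b :
  a <= b -> (forall t, a <= t <= b -> f t = g t) -> RInt f a b = RInt g a b.
Proof.
  intros Hab E. apply RInt_ext. intros t Ht.
  rewrite Rmin_left, Rmax_right in Ht by lra. apply E; lra.
Qed.

Lemma RInt_minus_continuous (f g : R -> R) a b :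
  (forall t, continuous f t) -> (forall t, continuous g t) ->
  RInt (fun t => f t - g t) a b = RInt f a b - RInt g a b.
Proof. intros. apply (RInt_minus f g); now apply (@ex_RInt_continuous R_CompleteNormedModule). Qed.

Lemma RInt_bform_zero_l M (a : R -> nat -> nat -> R) (s : R -> nat -> R) c d :
  RInt (fun t => bform M (a t) (fun _ => 0) (s t)) c d = 0.
Proof.
  rewrite (RInt_ext _ (fun _ => 0)) by (intros; apply bform_zero_l).
  rewrite RInt_const. apply Rmult_0_r.
Qed.

Lemma cell_int_ext xg yg i j f g : xg i <= xg (S i) -> yg j <= yg (S j) ->
  (forall x y, in_cell xg yg i j x y -> f x y = g x y) ->
  cell_int xg yg i j f = cell_int xg yg i j g.
Proof.
  intros Hx Hy E. apply RInt_ext_le; auto. intros x Hx'.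
  apply RInt_ext_le; auto. intros y Hy'. apply E; split; auto.
Qed.

Lemma cell_int_plus xg yg i j f g : continuous2 f -> continuous2 g ->
  cell_int xg yg i j (fun x y => f x y + g x y) = cell_int xg yg i j f + cell_int xg yg i j g.
Proof.
  intros Hf Hg. unfold cell_int.
  rewrite (RInt_ext _ (fun x => RInt (fun y => f x y) (yg j) (yg (S j))
                              + RInt (fun y => g x y) (yg j) (yg (S j)))).
  - apply (RInt_plus (fun x => RInt (fun y => f x y) _ _) (fun x => RInt (fun y => g x y) _ _));
      now apply ex_RInt_RInt.
  - intros. apply (RInt_plus (fun y => f x y) (fun y => g x y)); now apply continuous2_ex_RInt_y.
Qed.

Lemma cell_int_scal xg yg i j c f : continuous2 f ->
  cell_int xg yg i j (fun x y => c * f x y) = c * cell_int xg yg i j f.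
Proof.
  intros Hf. unfold cell_int.
  rewrite (RInt_ext _ (fun x => c * RInt (fun y => f x y) (yg j) (yg (S j)))).
  - apply (RInt_scal (fun x => RInt (fun y => f x y) _ _)); now apply ex_RInt_RInt.
  - intros. apply (RInt_scal (fun y => f x y)); now apply continuous2_ex_RInt_y.
Qed.

Lemma cell_int_minus xg yg i j f g : continuous2 f -> continuous2 g ->
  cell_int xg yg i j (fun x y => f x y - g x y) = cell_int xg yg i j f - cell_int xg yg i j g.
Proof.
  intros Hf Hg. unfold cell_int.
  rewrite (RInt_ext _ (fun x => RInt (fun y => f x y) (yg j) (yg (S j))
                              - RInt (fun y => g x y) (yg j) (yg (S j)))).
  - apply (RInt_minus (fun x => RInt (fun y => f x y) _ _) (fun x => RInt (fun y => g x y) _ _));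
      now apply ex_RInt_RInt.
  - intros. apply (RInt_minus (fun y => f x y) (fun y => g x y)); now apply continuous2_ex_RInt_y.
Qed.

Ltac solve_continuity leaf :=
  repeat (cbv beta; match goal with
  | |- forall _, _ => intro
  | |- continuous2 (fun _ _ => ?c) => apply (continuous2_const c)
  | |- continuous2 (fun x y => sumR ?n (@?F x y)) =>
      apply (continuous2_sumR n (fun m x y => F x y m)); intros ? ?
  | |- continuous2 (fun x y => @?f x y + @?g x y) => apply (continuous2_plus f g)
  | |- continuous2 (fun x y => @?f x y - @?g x y) => apply (continuous2_minus f g)
  | |- continuous2 (fun x y => @?f x y * @?g x y) => apply (continuous2_mult f g)
  | |- continuous2 (fun x y => @?f x y / ?c) => apply (continuous2_div_r f c)
  | |- continuous2 (fun x y => @?f x y ^ ?n) => apply (continuous2_pow f n)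
  | |- continuous2 (fun x y => pd ?d ?f x y) => apply (continuous2_pd d f); leaf
  | |- continuous2 (fun x y => ?f x y) => apply (C1_cont f); leaf
  | |- continuous (fun _ => ?c) _ => apply continuous_const
  | |- continuous (fun x => sumR ?n (@?F x)) _ =>
      apply (continuous_sumR n (fun m x => F x m)); intros ? ?
  | |- continuous (fun x => @?f x + @?g x) _ => apply (continuous_plus f g)
  | |- continuous (fun x => @?f x - @?g x) _ => apply (continuous_minus f g)
  | |- continuous (fun x => @?f x * @?g x) _ => apply (continuous_mult f g)
  | |- continuous (fun y => ?f ?a y) _ => apply (continuous2_y f); apply (C1_cont f); leaf
  | |- continuous (fun x => ?f x ?b) _ => apply (continuous2_x f); apply (C1_cont f); leaf
  end).

(** * The cell identity *)

Lemma volume_integrand_identity M (a : nat -> nat -> R) (da : nat -> nat -> nat -> R)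
  (s ds : nat -> nat -> R) (up um u : nat -> R) (du : nat -> nat -> R) :
  (forall k l, (k < M)%nat -> (l < M)%nat -> a k l = a l k) ->
  (forall l, (l < M)%nat -> u l = up l - um l) ->
  sumR M (fun k => sumR 2 (fun d => sumR M (fun l => a k l * s l d * du d k)))
  + (sumR M (fun k => sumR M (fun l => a k l * up l) * sumR 2 (fun d => ds k d))
     + sumR M (fun k => sumR 2 (fun d => sumR M (fun l => da d k l * up l * s k d))))
  - (sumR M (fun k => sumR M (fun l => a k l * um l) * sumR 2 (fun d => ds k d))
     + sumR M (fun k => sumR 2 (fun d => sumR M (fun l => da d k l * um l * s k d))))
  = sumR M (fun k => sumR M (fun l => da 0%nat k l * u l + a k l * du 0%nat l) * s k 0%nat
                     + sumR M (fun l => a k l * u l) * ds k 0%nat)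
  + sumR M (fun k => sumR M (fun l => da 1%nat k l * u l + a k l * du 1%nat l) * s k 1%nat
                     + sumR M (fun l => a k l * u l) * ds k 1%nat).
Proof.
  intros Hsym Hu.
  assert (Hswap : sumR M (fun k => sumR 2 (fun d => sumR M (fun l => a k l * s l d * du d k)))
    = sumR M (fun k => sumR M (fun l =>
        a k l * s k 0%nat * du 0%nat l + a k l * s k 1%nat * du 1%nat l))).
  { rewrite (sumR_ext M _ (fun k => sumR M (fun l =>
      a k l * s l 0%nat * du 0%nat k + a k l * s l 1%nat * du 1%nat k))).
    2:{ intros k Hk. simpl. now rewrite Rplus_0_l, <- sumR_plus. }
    rewrite sumR_comm. apply sumR_ext; intros l Hl. apply sumR_ext; intros k Hk.
    now rewrite (Hsym l k). }
  rewrite Hswap, <- ?sumR_plus, <- ?sumR_minus, <- ?sumR_plus.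
  apply sumR_ext; intros k Hk. simpl.
  rewrite ?Rplus_0_l, <- ?sumR_scal_r, <- ?sumR_plus, <- ?sumR_minus, <- ?sumR_plus.
  apply sumR_ext; intros l Hl. rewrite Hu; auto. ring.
Qed.

Definition C1_mesh (Nx Ny M : nat) (u : nat -> dgfun) : Prop :=
  forall k i j, (k < M)%nat -> (i < Nx)%nat -> (j < Ny)%nat -> C1 (u k i j).

Definition C1_mesh2 (Nx Ny M : nat) (w : nat -> nat -> dgfun) : Prop :=
  forall k d i j, (k < M)%nat -> (d < 2)%nat -> (i < Nx)%nat -> (j < Ny)%nat -> C1 (w k d i j).

Definition cell_energy (xg yg : nat -> R) (M : nat) (dt : R)
  (va vb : nat -> dgfun) (Sa Sb : nat -> nat -> dgfun) (i j : nat) : R :=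
  cell_int xg yg i j (fun x y =>
    sumR M (fun k => ((va k i j x y - vb k i j x y) / dt) ^ 2)
    + sumR M (fun k => sumR 2 (fun d => Sa k d i j x y * Sb k d i j x y))).

Definition xedge_flux (xg yg : nat -> R) (M : nat) (A : coefmat)
  (W : nat -> nat -> dgfun) (D : nat -> dgfun) (i j : nat) : R :=
  RInt (fun y => bform M (fun k l => A i j k l (xg (S i)) y)
    (fun l => W l 0%nat i j (xg (S i)) y) (fun k => D k (S i) j (xg (S i)) y)) (yg j) (yg (S j)).

Definition yedge_flux (xg yg : nat -> R) (M : nat) (A : coefmat)
  (W : nat -> nat -> dgfun) (D : nat -> dgfun) (i j : nat) : R :=
  RInt (fun x => bform M (fun k l => A i j k l x (yg (S j)))
    (fun l => W l 1%nat i j x (yg (S j))) (fun k => D k i (S j) x (yg (S j)))) (xg i) (xg (S i)).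

Section CellIdentity.

Variables (Nx Ny M : nat) (xg yg : nat -> R) (A : coefmat) (dt : R).
Variables (vp vc vm D : nat -> dgfun) (Sp Sc Sm : nat -> nat -> dgfun).

Hypothesis Hxg : forall i, (i < Nx)%nat -> xg i < xg (S i).
Hypothesis Hyg : forall j, (j < Ny)%nat -> yg j < yg (S j).
Hypothesis HA : forall i j k l, (i < Nx)%nat -> (j < Ny)%nat -> (k < M)%nat -> (l < M)%nat ->
  C1 (A i j k l).
Hypothesis Asym : forall i j, (i < Nx)%nat -> (j < Ny)%nat -> forall x y, in_cell xg yg i j x y ->
  forall k l, (k < M)%nat -> (l < M)%nat -> A i j k l x y = A i j l k x y.
Hypotheses (Hvp : C1_mesh Nx Ny M vp) (Hvc : C1_mesh Nx Ny M vc) (Hvm : C1_mesh Nx Ny M vm).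
Hypotheses (HSp : C1_mesh2 Nx Ny M Sp) (HSc : C1_mesh2 Nx Ny M Sc) (HSm : C1_mesh2 Nx Ny M Sm).
Hypothesis HD : forall k i j x y, D k i j x y = vp k i j x y - vm k i j x y.
Hypothesis Hdt : dt <> 0.

Let HDC1 : C1_mesh Nx Ny M D.
Proof.
  intros k i j Hk Hi Hj. apply C1_ext with (fun x y => vp k i j x y - vm k i j x y).
  - intros; now rewrite HD.
  - apply C1_minus; auto.
Qed.

Local Ltac leaf := first [apply HA | apply Hvp | apply Hvc | apply Hvm | apply HSp | apply HSc
  | apply HSm | apply HDC1]; lia.

Lemma cell_time_terms i j : (i < Nx)%nat -> (j < Ny)%nat ->
  cell_int xg yg i j (fun x y => sumR M (fun k =>
    (vp k i j x y - 2 * vc k i j x y + vm k i j x y) / dt ^ 2 * D k i j x y))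
  + cell_int xg yg i j (fun x y => sumR M (fun k => sumR 2 (fun d => Sp k d i j x y * Sc k d i j x y)))
  - cell_int xg yg i j (fun x y => sumR M (fun k => sumR 2 (fun d => Sm k d i j x y * Sc k d i j x y)))
  = cell_energy xg yg M dt vp vc Sp Sc i j - cell_energy xg yg M dt vc vm Sc Sm i j.
Proof.
  intros Hi Hj. assert (Hx := Hxg i Hi). assert (Hy := Hyg j Hj). unfold cell_energy.
  rewrite <- cell_int_plus, <- !cell_int_minus; solve_continuity leaf.
  apply cell_int_ext; try lra. intros x y _. cbv beta.
  rewrite <- ?sumR_plus, <- ?sumR_minus, <- ?sumR_plus, <- ?sumR_minus.
  apply sumR_ext; intros k Hk. simpl. rewrite HD.
  (* (a - 2 b + c) (a - c) = (a - b)^2 - (b - c)^2 *)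
  field. auto.
Qed.

Let Fx i j := bform_fun M (A i j) (fun l => D l i j) (fun k => Sc k 0%nat i j).
Let Fy i j := bform_fun M (A i j) (fun l => D l i j) (fun k => Sc k 1%nat i j).

Lemma cell_volume_terms i j : (i < Nx)%nat -> (j < Ny)%nat ->
  cell_int xg yg i j (fun x y => sumR M (fun k => sumR 2 (fun d => sumR M (fun l =>
    A i j k l x y * Sc l d i j x y * pd d (D k i j) x y))))
  + (cell_int xg yg i j (fun x y => sumR M (fun k =>
       sumR M (fun l => A i j k l x y * vp l i j x y) * sumR 2 (fun d => pd d (Sc k d i j) x y)))
     + cell_int xg yg i j (fun x y => sumR M (fun k => sumR 2 (fun d => sumR M (fun l =>
       pd d (A i j k l) x y * vp l i j x y * Sc k d i j x y)))))
  - (cell_int xg yg i j (fun x y => sumR M (fun k =>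
       sumR M (fun l => A i j k l x y * vm l i j x y) * sumR 2 (fun d => pd d (Sc k d i j) x y)))
     + cell_int xg yg i j (fun x y => sumR M (fun k => sumR 2 (fun d => sumR M (fun l =>
       pd d (A i j k l) x y * vm l i j x y * Sc k d i j x y)))))
  = (RInt (fun y => Fx i j (xg (S i)) y) (yg j) (yg (S j))
     - RInt (fun y => Fx i j (xg i) y) (yg j) (yg (S j)))
  + (RInt (fun x => Fy i j x (yg (S j))) (xg i) (xg (S i))
     - RInt (fun x => Fy i j x (yg j)) (xg i) (xg (S i))).
Proof.
  intros Hi Hj. assert (Hx := Hxg i Hi). assert (Hy := Hyg j Hj).
  assert (CFx : C1 (Fx i j)) by (apply C1_bform_fun; intros; leaf).
  assert (CFy : C1 (Fy i j)) by (apply C1_bform_fun; intros; leaf).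
  rewrite <- (RInt_RInt_dxp (Fx i j) (xg i) (xg (S i)) (yg j) (yg (S j)) CFx).
  rewrite <- (RInt_RInt_dyp (Fy i j) (xg i) (xg (S i)) (yg j) (yg (S j)) CFy).
  fold (cell_int xg yg i j (dxp (Fx i j))) (cell_int xg yg i j (dyp (Fy i j))).
  rewrite <- (cell_int_plus xg yg i j (dxp (Fx i j)) (dyp (Fy i j)))
    by (first [apply C1_cont_dxp | apply C1_cont_dyp]; auto).
  rewrite <- !cell_int_plus, <- !cell_int_minus; solve_continuity leaf.
  apply cell_int_ext; try lra. intros x y Hc.
  change (dxp (Fx i j) x y) with (pd 0 (Fx i j) x y).
  change (dyp (Fy i j) x y) with (pd 1 (Fy i j) x y).
  unfold Fx, Fy. rewrite !pd_bform_fun by (intros; leaf).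
  apply (volume_integrand_identity M (fun k l => A i j k l x y) (fun d k l => pd d (A i j k l) x y)
    (fun l d => Sc l d i j x y) (fun k d => pd d (Sc k d i j) x y)
    (fun l => vp l i j x y) (fun l => vm l i j x y) (fun l => D l i j x y)
    (fun d k => pd d (D k i j) x y)); intros; auto.
Qed.

Let Asym_edge i j x y : (i < Nx)%nat -> (j < Ny)%nat -> in_cell xg yg i j x y ->
  forall u s, bform M (fun k l => A i j k l x y) u s = bform M (fun k l => A i j k l x y) s u.
Proof. intros Hi Hj Hc u s. apply bform_sym. intros; apply Asym; auto. Qed.

Let bform_vp_minus_vm a i j x y s :
  bform M a (fun l => vp l i j x y) s - bform M a (fun l => vm l i j x y) s
  = bform M a (fun l => D l i j x y) s.
Proof.
  rewrite <- bform_minus_l. unfold bform. apply sumR_ext; intros k _.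
  f_equal. apply sumR_ext; intros l _. now rewrite HD.
Qed.

Lemma xflux_right i j : (i < Nx)%nat -> (j < Ny)%nat ->
  RInt (fun y => Fx i j (xg (S i)) y) (yg j) (yg (S j))
  - RInt (fun y => bform M (fun k l => A i j k l (xg (S i)) y)
      (fun l => Sc l 0%nat i j (xg (S i)) y) (fun k => D k i j (xg (S i)) y)) (yg j) (yg (S j))
  - RInt (fun y => bform M (fun k l => A i j k l (xg (S i)) y)
      (fun l => vhat_right Nx (vp l) i j (xg (S i)) y) (fun k => Sc k 0%nat i j (xg (S i)) y))
      (yg j) (yg (S j))
  + RInt (fun y => bform M (fun k l => A i j k l (xg (S i)) y)
      (fun l => vhat_right Nx (vm l) i j (xg (S i)) y) (fun k => Sc k 0%nat i j (xg (S i)) y))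
      (yg j) (yg (S j))
  = - (if Nat.eqb (S i) Nx then 0 else xedge_flux xg yg M A Sc D i j).
Proof.
  intros Hi Hj. assert (Hx := Hxg i Hi). assert (Hy := Hyg j Hj).
  assert (Hedge : forall y, yg j <= y <= yg (S j) -> in_cell xg yg i j (xg (S i)) y)
    by (intros; split; lra).
  assert (E0 : RInt (fun y => Fx i j (xg (S i)) y) (yg j) (yg (S j))
    = RInt (fun y => bform M (fun k l => A i j k l (xg (S i)) y)
        (fun l => Sc l 0%nat i j (xg (S i)) y) (fun k => D k i j (xg (S i)) y)) (yg j) (yg (S j))).
  { apply RInt_ext_le; [lra|]. intros; apply Asym_edge; auto. }
  rewrite E0. unfold vhat_right. destruct (Nat.eqb_spec (S i) Nx) as [Hlast|Hlast].
  - rewrite !RInt_bform_zero_l. lra.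
  - match goal with |- _ - _ - ?P + ?Q = _ =>
      enough (E1 : P - Q = xedge_flux xg yg M A Sc D i j) by lra end.
    rewrite <- RInt_minus_continuous by (unfold bform; solve_continuity leaf).
    apply RInt_ext_le; [lra|]. intros y Hy'. cbv beta.
    rewrite bform_vp_minus_vm. apply Asym_edge; auto.
Qed.

Lemma xflux_left i j : (i < Nx)%nat -> (j < Ny)%nat ->
  - RInt (fun y => Fx i j (xg i) y) (yg j) (yg (S j))
  + RInt (fun y => bform M (fun k l => A (Nat.pred i) j k l (xg i) y)
      (fun l => Sc l 0%nat (Nat.pred i) j (xg i) y) (fun k => D k i j (xg i) y)) (yg j) (yg (S j))
  + RInt (fun y => bform M (fun k l => A i j k l (xg i) y)
      (fun l => vhat_left (vp l) i j (xg i) y) (fun k => Sc k 0%nat i j (xg i) y)) (yg j) (yg (S j))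
  - RInt (fun y => bform M (fun k l => A i j k l (xg i) y)
      (fun l => vhat_left (vm l) i j (xg i) y) (fun k => Sc k 0%nat i j (xg i) y)) (yg j) (yg (S j))
  = if Nat.eqb i 0 then 0 else xedge_flux xg yg M A Sc D (Nat.pred i) j.
Proof.
  intros Hi Hj. assert (Hx := Hxg i Hi). assert (Hy := Hyg j Hj).
  unfold vhat_left. destruct i as [|i]; cbn [Nat.eqb Nat.pred].
  - assert (E : RInt (fun y => Fx 0%nat j (xg 0%nat) y) (yg j) (yg (S j))
      = RInt (fun y => bform M (fun k l => A 0%nat j k l (xg 0%nat) y)
          (fun l => Sc l 0%nat 0%nat j (xg 0%nat) y) (fun k => D k 0%nat j (xg 0%nat) y))
          (yg j) (yg (S j))).
    { apply RInt_ext_le; [lra|]. intros; apply Asym_edge; auto. split; lra. }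
    rewrite !RInt_bform_zero_l. lra.
  - match goal with |- _ + _ + ?P - ?Q = _ =>
      enough (E1 : P - Q = RInt (fun y => Fx (S i) j (xg (S i)) y) (yg j) (yg (S j)))
        by (unfold xedge_flux; lra) end.
    rewrite <- RInt_minus_continuous by (unfold bform; solve_continuity leaf).
    apply RInt_ext. intros y _. apply bform_vp_minus_vm.
Qed.

Lemma yflux_top i j : (i < Nx)%nat -> (j < Ny)%nat ->
  RInt (fun x => Fy i j x (yg (S j))) (xg i) (xg (S i))
  - RInt (fun x => bform M (fun k l => A i j k l x (yg (S j)))
      (fun l => Sc l 1%nat i j x (yg (S j))) (fun k => D k i j x (yg (S j)))) (xg i) (xg (S i))
  - RInt (fun x => bform M (fun k l => A i j k l x (yg (S j)))
      (fun l => vhat_top Ny (vp l) i j x (yg (S j))) (fun k => Sc k 1%nat i j x (yg (S j))))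
      (xg i) (xg (S i))
  + RInt (fun x => bform M (fun k l => A i j k l x (yg (S j)))
      (fun l => vhat_top Ny (vm l) i j x (yg (S j))) (fun k => Sc k 1%nat i j x (yg (S j))))
      (xg i) (xg (S i))
  = - (if Nat.eqb (S j) Ny then 0 else yedge_flux xg yg M A Sc D i j).
Proof.
  intros Hi Hj. assert (Hx := Hxg i Hi). assert (Hy := Hyg j Hj).
  assert (Hedge : forall x, xg i <= x <= xg (S i) -> in_cell xg yg i j x (yg (S j)))
    by (intros; split; lra).
  assert (E0 : RInt (fun x => Fy i j x (yg (S j))) (xg i) (xg (S i))
    = RInt (fun x => bform M (fun k l => A i j k l x (yg (S j)))
        (fun l => Sc l 1%nat i j x (yg (S j))) (fun k => D k i j x (yg (S j)))) (xg i) (xg (S i))).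
  { apply RInt_ext_le; [lra|]. intros; apply Asym_edge; auto. }
  rewrite E0. unfold vhat_top. destruct (Nat.eqb_spec (S j) Ny) as [Hlast|Hlast].
  - rewrite !RInt_bform_zero_l. lra.
  - match goal with |- _ - _ - ?P + ?Q = _ =>
      enough (E1 : P - Q = yedge_flux xg yg M A Sc D i j) by lra end.
    rewrite <- RInt_minus_continuous by (unfold bform; solve_continuity leaf).
    apply RInt_ext_le; [lra|]. intros x Hx'. cbv beta.
    rewrite bform_vp_minus_vm. apply Asym_edge; auto.
Qed.

Lemma yflux_bottom i j : (i < Nx)%nat -> (j < Ny)%nat ->
  - RInt (fun x => Fy i j x (yg j)) (xg i) (xg (S i))
  + RInt (fun x => bform M (fun k l => A i (Nat.pred j) k l x (yg j))
      (fun l => Sc l 1%nat i (Nat.pred j) x (yg j)) (fun k => D k i j x (yg j))) (xg i) (xg (S i))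
  + RInt (fun x => bform M (fun k l => A i j k l x (yg j))
      (fun l => vhat_bottom (vp l) i j x (yg j)) (fun k => Sc k 1%nat i j x (yg j))) (xg i) (xg (S i))
  - RInt (fun x => bform M (fun k l => A i j k l x (yg j))
      (fun l => vhat_bottom (vm l) i j x (yg j)) (fun k => Sc k 1%nat i j x (yg j))) (xg i) (xg (S i))
  = if Nat.eqb j 0 then 0 else yedge_flux xg yg M A Sc D i (Nat.pred j).
Proof.
  intros Hi Hj. assert (Hx := Hxg i Hi). assert (Hy := Hyg j Hj).
  unfold vhat_bottom. destruct j as [|j]; cbn [Nat.eqb Nat.pred].
  - assert (E : RInt (fun x => Fy i 0%nat x (yg 0%nat)) (xg i) (xg (S i))
      = RInt (fun x => bform M (fun k l => A i 0%nat k l x (yg 0%nat))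
          (fun l => Sc l 1%nat i 0%nat x (yg 0%nat)) (fun k => D k i 0%nat x (yg 0%nat)))
          (xg i) (xg (S i))).
    { apply RInt_ext_le; [lra|]. intros; apply Asym_edge; auto. split; lra. }
    rewrite !RInt_bform_zero_l. lra.
  - match goal with |- _ + _ + ?P - ?Q = _ =>
      enough (E1 : P - Q = RInt (fun x => Fy i (S j) x (yg (S j))) (xg i) (xg (S i)))
        by (unfold yedge_flux; lra) end.
    rewrite <- RInt_minus_continuous by (unfold bform; solve_continuity leaf).
    apply RInt_ext. intros x _. apply bform_vp_minus_vm.
Qed.

Lemma cell_identity i j : (i < Nx)%nat -> (j < Ny)%nat ->
  ldg_eq1 xg yg M A dt vm vc vp Sc D i j
  + ldg_eq2 Nx Ny xg yg M A vp Sp Sc i j - ldg_eq2 Nx Ny xg yg M A vm Sm Sc i j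
  = (cell_energy xg yg M dt vp vc Sp Sc i j - cell_energy xg yg M dt vc vm Sc Sm i j)
    + ((if Nat.eqb i 0 then 0 else xedge_flux xg yg M A Sc D (Nat.pred i) j)
       - (if Nat.eqb (S i) Nx then 0 else xedge_flux xg yg M A Sc D i j))
    + ((if Nat.eqb j 0 then 0 else yedge_flux xg yg M A Sc D i (Nat.pred j))
       - (if Nat.eqb (S j) Ny then 0 else yedge_flux xg yg M A Sc D i j)).
Proof.
  intros Hi Hj.
  pose proof (cell_time_terms i j Hi Hj). pose proof (cell_volume_terms i j Hi Hj).
  pose proof (xflux_left i j Hi Hj). pose proof (xflux_right i j Hi Hj).
  pose proof (yflux_bottom i j Hi Hj). pose proof (yflux_top i j Hi Hj).
  unfold ldg_eq1, ldg_eq2, Fx, Fy, bform_fun, bform in *. cbv beta zeta in *. lra.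
Qed.

Lemma mesh_energy_conserved :
  (forall i j, (i < Nx)%nat -> (j < Ny)%nat ->
     ldg_eq1 xg yg M A dt vm vc vp Sc D i j
     + ldg_eq2 Nx Ny xg yg M A vp Sp Sc i j - ldg_eq2 Nx Ny xg yg M A vm Sm Sc i j = 0) ->
  mesh_sum Nx Ny (cell_energy xg yg M dt vp vc Sp Sc)
  = mesh_sum Nx Ny (cell_energy xg yg M dt vc vm Sc Sm).
Proof.
  intros Hscheme.
  rewrite (mesh_sum_ext Nx Ny _ (fun i j => cell_energy xg yg M dt vc vm Sc Sm i j
    - ((if Nat.eqb i 0 then 0 else xedge_flux xg yg M A Sc D (Nat.pred i) j)
       - (if Nat.eqb (S i) Nx then 0 else xedge_flux xg yg M A Sc D i j))
    - ((if Nat.eqb j 0 then 0 else yedge_flux xg yg M A Sc D i (Nat.pred j))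
       - (if Nat.eqb (S j) Ny then 0 else yedge_flux xg yg M A Sc D i j)))).
  - rewrite 2!mesh_sum_minus, mesh_sum_telescope_x, mesh_sum_telescope_y. ring.
  - intros i j Hi Hj. pose proof (cell_identity i j Hi Hj). rewrite Hscheme in *; auto. lra.
Qed.

End CellIdentity.

Lemma energy_mesh_sum Nx Ny M (xg yg : nat -> R) dt (v : nat -> nat -> dgfun)
  (Sh : nat -> nat -> nat -> dgfun) m :
  (forall i, (i < Nx)%nat -> xg i < xg (S i)) ->
  (forall j, (j < Ny)%nat -> yg j < yg (S j)) ->
  (forall n, C1_mesh Nx Ny M (v n)) -> (forall n, C1_mesh2 Nx Ny M (Sh n)) -> dt <> 0 ->
  energy Nx Ny xg yg M dt v Sh m
  = mesh_sum Nx Ny (cell_energy xg yg M dt (v m) (v (m - 1)%nat) (Sh m) (Sh (m - 1)%nat)).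
Proof.
  intros Hxg Hyg Hv HS Hdt. unfold energy, l2sq, l2sq2.
  rewrite <- sumR_scal_l, <- sumR_plus, <- sumR_minus. apply sumR_ext; intros i Hi.
  rewrite <- sumR_scal_l, <- sumR_plus, <- sumR_minus. apply sumR_ext; intros j Hj.
  assert (Hx := Hxg i Hi). assert (Hy := Hyg j Hj).
  rewrite <- cell_int_scal, <- cell_int_plus, <- cell_int_minus;
    solve_continuity ltac:(first [apply Hv | apply HS]; lia).
  apply cell_int_ext; try lra. intros x y _. cbv beta.
  rewrite <- ?sumR_scal_l, <- ?sumR_plus, <- ?sumR_minus, <- ?sumR_plus.
  apply sumR_ext; intros k Hk. simpl.
  field. auto.
Qed.

Theorem theorem3 (Nx Ny M k : nat) (xg yg : nat -> R) (A : coefmat) (dt : R)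
  (v : nat -> nat -> dgfun) (Sh : nat -> nat -> nat -> dgfun) :
  (0 < Nx)%nat -> (0 < Ny)%nat ->
  (forall i, (i < Nx)%nat -> xg i < xg (S i)) ->
  (forall j, (j < Ny)%nat -> yg j < yg (S j)) ->
  (forall i j kk l, (i < Nx)%nat -> (j < Ny)%nat -> (kk < M)%nat -> (l < M)%nat ->
     smooth2 (A i j kk l)) ->
  (forall i j, (i < Nx)%nat -> (j < Ny)%nat -> spd_on_cell xg yg M A i j) ->
  0 < dt ->
  (forall n, in_VhM Nx Ny M k (v n)) ->
  (forall n, in_VhM2 Nx Ny M k (Sh n)) ->
  (forall n, (1 <= n)%nat -> forall i j, (i < Nx)%nat -> (j < Ny)%nat ->
     forall p, in_VhM Nx Ny M k p ->
     ldg_eq1 xg yg M A dt (v (n - 1)%nat) (v n) (v (S n)) (Sh n) p i j = 0) ->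
  (forall n i j, (i < Nx)%nat -> (j < Ny)%nat ->
     forall w, in_VhM2 Nx Ny M k w ->
     ldg_eq2 Nx Ny xg yg M A (v n) (Sh n) w i j = 0) ->
  forall n, (1 <= n)%nat ->
    energy Nx Ny xg yg M dt v Sh (S n) = energy Nx Ny xg yg M dt v Sh n.
Proof.
  intros _ _ Hxg Hyg Hsmooth Hspd Hdt Hv HS Heq1 Heq2 n Hn.
  assert (HvC1 : forall m, C1_mesh Nx Ny M (v m))
    by (intros m kk i j Hk Hi Hj; apply (poly2_C1 k), Hv; auto).
  assert (HSC1 : forall m, C1_mesh2 Nx Ny M (Sh m))
    by (intros m kk d i j Hk Hd Hi Hj; apply (poly2_C1 k), HS; auto).
  rewrite !energy_mesh_sum by (auto; lra).
  replace (S n - 1)%nat with n by lia.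
  apply mesh_energy_conserved
    with (A := A) (D := fun kk i j x y => v (S n) kk i j x y - v (n - 1)%nat kk i j x y);
    auto; try lra.
  - intros; apply smooth2_C1, Hsmooth; auto.
  - intros i j Hi Hj x y Hc. apply (Hspd i j Hi Hj x y Hc).
  - intros i j Hi Hj. rewrite Heq1, !Heq2; auto; [ring|].
    intros kk Hk i' j' Hi' Hj'. apply poly2_minus; apply Hv; auto.
Qed.
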